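(* Let $\mathbf b_i\in\mathcal B_k$ be an interior point of $P(A)$. Let $\beta_1,\dots,\beta_{R_k}$ be the elements of $\{1/\ell_0,2/\ell_0,\dots,\ell_0/\ell_0\}$ not of the form $1-s_0^{(j)}/\ell_0$ with $\mathbf b_j\in\mathcal B_k$ a boundary point of $P(A)$ (one may take $\beta_1=1$), and let $\alpha_1,\dots,\alpha_{R_k}$ be the elements remaining on the list $\frac{v^{(i)}_r+\sigma}{\ell_r}$ ($r=1,\dots,m$, $\sigma=0,\dots,\ell_r-1$) after one copy of each element $1-s_0^{(j)}/\ell_0$ with $\mathbf b_j\in\mathcal B_k$ a boundary point of $P(A)$ has been removed. Then the $R_k$ series $F^{(\mathbf b_j)}_{\mathbf b_i}(\lambda)$ with $\mathbf b_j\in\mathcal B_k$ an interior point of $P(A)$ are obtained from a full set of solutions at $x=0$ of the hypergeometric operator \[(\delta_x+\beta_1-1)\cdots(\delta_x+\beta_{R_k}-1)-x(\delta_x+\alpha_1)\cdots(\delta_x+\alpha_{R_k}),\qquad\delta_x=x\tfrac{d}{dx},\] by replacing $x$ by $\lambda^{\ell_0}$; that is, $F^{(\mathbf b_j)}_{\mathbf b_i}(\lambda)=H_j(\lambda^{\ell_0})$ where the $H_j(x)$ (formal series in $x^{s_0^{(j)}/\ell_0}\mathbb C[[x]]$) form a full set of solutions of this operator at $x=0$.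
   Context: Let $A=\{\mathbf a_1,\dots,\mathbf a_m\}\subseteq\mathbb Z^n$ be linearly independent over $\mathbb R$, $\mathbf a_0\in\mathbb Z^n$, and $\ell_0,\dots,\ell_m$ positive integers with gcd $1$, $\ell_0\mathbf a_0=\sum_{j=1}^m\ell_j\mathbf a_j$, $\ell_0=\sum_{j=1}^m\ell_j$. Let $\mathbb ZA$, $\mathbb ZA_+$ be the groups generated by $A$ and $A\cup\{\mathbf a_0\}$. Let $V$ be the real span of $A$, $V_{\mathbb Z}=V\cap\mathbb Z^n$, $P(A)=\{\sum_jc_j\mathbf a_j:0\le c_j<1\}$, $\mathcal B=V_{\mathbb Z}\cap P(A)$. Each $\mathbf b\in\mathcal B$ is written uniquely $\mathbf b=\sum_rv_r\mathbf a_r$ with $v_r\in[0,1)$; $\mathbf b$ is an interior point of $P(A)$ if all $v_r>0$ and a boundary point otherwise. Fix a coset $\mathcal C_k$ of $\mathbb ZA_+$ in $V_{\mathbb Z}$, put $\mathcal B_k=\mathcal B\cap\mathcal C_k$ (it has $\ell_0$ elements), and let $R_k$ be the number of interior points of $P(A)$ in $\mathcal B_k$. Fix $\mathbf b_i\in\mathcal B_k$. For $\mathbf b_j\in\mathcal B_k$ write $\mathbf b_j=\sum_rv^{(j)}_r\mathbf a_r$, let $s_0^{(j)}\in\{0,\dots,\ell_0-1\}$ be the unique element with $\mathbf b_i+s_0^{(j)}\mathbf a_0\equiv\mathbf b_j\pmod{\mathbb ZA}$, and let $s^{(j)}_r\in\mathbb Z$ ($r=1,\dots,m$) be determined by $\mathbf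 b_i+s_0^{(j)}\mathbf a_0=\mathbf b_j-\sum_rs^{(j)}_r\mathbf a_r$. Define \[F^{(\mathbf b_j)}_{\mathbf b_i}(\lambda)=\lambda^{s_0^{(j)}}\sum_{s=0}^\infty\frac{\prod_{r=1}^m\prod_{\sigma=0}^{\ell_r-1}\big(\frac{v^{(j)}_r-s^{(j)}_r+\sigma}{\ell_r}\big)_s}{\prod_{t=1}^{\ell_0}\big(\frac{s^{(j)}_0+t}{\ell_0}\big)_s}\lambda^{s\ell_0},\] with $(a)_s=a(a+1)\cdots(a+s-1)$. *)

From HB Require Import structures.
From mathcomp Require Import all_boot all_order all_algebra.
From mathcomp Require Import boolp classical_sets reals.
From mathcomp Require Import complex.
Set Implicit Arguments. Unset Strict Implicit. Unset Printing Implicit Defensive.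
Import Order.TTheory GRing.Theory Num.Theory.
Local Open Scope ring_scope.

(* Formal series at x = 0 with rational exponents: H q is the coefficient of x^q. *)
Definition series (C : Type) := rat -> C.

Section Setup.
Variable R : realType.
Local Notation C := (R[i]).
Definition toC (x : R) : C := Complex x 0.

Variables (n m : nat) (a : 'I_m -> 'rV[int]_n) (a0 : 'rV[int]_n)
          (l0 : nat) (l : 'I_m -> nat).

Definition AZ : 'M[int]_(m, n) := \matrix_(j < m, k < n) a j 0 k.
Definition AR : 'M[R]_(m, n) := map_mx (fun z : int => z%:~R) AZ.
Definition toR (v : 'rV[int]_n) : 'rV[R]_n := map_mx (fun z : int => z%:~R) v.

Definition lin_indep_R : Prop := forall c : 'rV[R]_m, c *m AR = 0 -> c = 0.

Definition in_VZ (v : 'rV[int]_n) : Prop := exists c : 'rV[R]_m, toR v = c *m AR.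
Definition in_ZA (v : 'rV[int]_n) : Prop := exists z : 'rV[int]_m, v = z *m AZ.
Definition in_ZAplus (v : 'rV[int]_n) : Prop :=
  exists (z0 : int) (z : 'rV[int]_m), v = a0 *~ z0 + z *m AZ.
Definition in_PA (x : 'rV[R]_n) : Prop :=
  exists c : 'rV[R]_m, (forall r, 0 <= c 0 r < 1) /\ x = c *m AR.
Definition in_B (v : 'rV[int]_n) : Prop := in_VZ v /\ in_PA (toR v).
Definition coords (v : 'rV[int]_n) : 'rV[R]_m :=
  xget 0 [set c : 'rV[R]_m | toR v = c *m AR].
Definition interior_pt (v : 'rV[int]_n) : Prop := forall r, 0 < coords v 0 r.
Definition boundary_pt (v : 'rV[int]_n) : Prop := ~ interior_pt v.

Variable c0 : 'rV[int]_n.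
Definition in_Ck (v : 'rV[int]_n) : Prop := in_ZAplus (v - c0).
Definition in_Bk (v : 'rV[int]_n) : Prop := in_B v /\ in_Ck v.

Variable bi : 'rV[int]_n.
Definition s0 (bj : 'rV[int]_n) : nat :=
  xget 0%N [set s : nat | (s < l0)%N /\ in_ZA (bj - (bi + a0 *+ s))].
Definition svec (bj : 'rV[int]_n) : 'rV[int]_m :=
  xget 0 [set z : 'rV[int]_m | bi + a0 *+ s0 bj = bj - z *m AZ].

Definition poch (x : C) (s : nat) : C := \prod_(k < s) (x + k%:R).

(* the coefficient of lambda^(s0 + s l0) in F^{(b_j)}_{b_i} *)
Definition Fcoef (bj : 'rV[int]_n) (s : nat) : C :=
  (\prod_(r < m) \prod_(sg < l r)
      poch ((toC (coords bj 0 r) - (svec bj 0 r)%:~R + sg%:R) / (l r)%:R) s)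
  / \prod_(t < l0) poch (((s0 bj)%:R + (t.+1)%:R) / l0%:R) s.

(* F^{(b_j)}_{b_i}(lambda) as a power series in lambda: coefficient of lambda^N *)
Definition Fser (bj : 'rV[int]_n) : nat -> C := fun N =>
  if ((s0 bj <= N)%N && (l0 %| N - s0 bj)%N)
  then Fcoef bj ((N - s0 bj) %/ l0)%N else 0.

Definition bdry_val (q : R) : bool :=
  `[< exists bj, in_Bk bj /\ boundary_pt bj /\ q = 1 - (s0 bj)%:R / l0%:R >].

Definition betas : seq R :=
  [seq q <- [seq (u%:R / l0%:R : R) | u <- iota 1 l0] | ~~ bdry_val q].

Definition alpha_list : seq R :=
  flatten [seq [seq (coords bi 0 r + sg%:R) / (l r)%:R | sg <- iota 0 (l r)]
          | r <- enum 'I_m].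
(* the set {1 - s_0^{(j)}/l0 : b_j ∈ B_k boundary}, each element listed once *)
Definition bdry_vals : seq R :=
  [seq q <- [seq (1 - t%:R / l0%:R : R) | t <- iota 0 l0] | bdry_val q].
Definition alphas : seq R := foldr (fun q s => rem q s) alpha_list bdry_vals.

End Setup.

Section Operators.
Variable R : realType.
Local Notation C := (R[i]).

(* (delta_x + c) acting on formal series: x^q |-> (q + c) x^q *)
Definition dshift (c : C) (H : series C) : series C := fun q => (ratr q + c) * H q.
Definition xmul (H : series C) : series C := fun q => H (q - 1).

Definition hyperop (bs als : seq R) (H : series C) : series C := fun q =>
  foldr (fun b G => dshift (toC b - 1) G) H bs q
  - xmul (foldr (fun a G => dshift (toC a) G) H als) q.

Definition is_solution (bs als : seq R) (H : series C) : Prop :=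
  forall q, hyperop bs als H q = 0.

Definition in_xcCx (c : rat) (H : series C) : Prop :=
  forall q, H q != 0 -> exists s : nat, q = c + s%:Q.

Definition is_subst (F : nat -> C) (l0 : nat) (H : series C) : Prop :=
  (forall N : nat, F N = H (N%:Q / l0%:Q)) /\
  (forall q, H q != 0 -> exists N : nat, q = N%:Q / l0%:Q).

Definition lin_indep_on {T : eqType} (I : T -> Prop) (H : T -> series C) : Prop :=
  forall (s : seq T) (k : T -> C), uniq s -> (forall b, b \in s -> I b) ->
    (forall q, \sum_(b <- s) k b * H b q = 0) ->
    forall b, b \in s -> k b = 0.
End Operators.

(* The map b_j |-> s_0^(j) is a bijection from B_k onto {0, ..., l_0 - 1}: it is
   injective because the coordinates of points of B_k lie in [0, 1) and, once the
   contribution s_0 a_0 is removed, differ by integers, and it is surjective by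
   flooring the coordinates of b_i + t a_0.  As a_0 has coordinates l_r / l_0, the
   coordinates of b_j are v^(i)_r + s_0 l_r / l_0 + s^(j)_r, so the Pochhammer
   arguments of F^(b_j) are the full list (v^(i)_r + sigma) / l_r shifted by
   s_0 / l_0.  Hence H_j(x) = F^(b_j)(x^(1/l_0)) satisfies the coefficient
   recurrence of the operator with the full lists beta = u / l_0 (u = 1..l_0) and
   alpha = (v^(i)_r + sigma) / l_r.  For a boundary point b_j some coordinate
   vanishes, which makes 1 - s_0^(j) / l_0 one of the alphas; the corresponding
   factors delta_x - s_0^(j) / l_0 are common to both sides of the full operator and
   do not vanish on the exponents s_0 / l_0 + N of an interior b_j, so they cancel.
   The leading exponents s_0 / l_0 are distinct, which gives linear independence,
   and l_0 = sum_r l_r makes both reduced lists have R_k elements. *)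

From Pilot Require Import Defs.
From HB Require Import structures.
From mathcomp Require Import all_boot all_order all_algebra.
From mathcomp Require Import boolp classical_sets reals complex.
From mathcomp Require Import ring lra zify.
Import Order.TTheory GRing.Theory Num.Theory.
Set Implicit Arguments. Unset Strict Implicit. Unset Printing Implicit Defensive.
Local Open Scope ring_scope.

Lemma perm_cat_foldr_rem (T : eqType) (r s : seq T) :
  uniq r -> {subset r <= s} -> perm_eq s (r ++ foldr (fun x s => rem x s) s r).
Proof.
elim: r => [|x r IHr] /=; first by rewrite perm_refl.
case/andP=> xr ur rs; set s' := foldr _ s r.
have ps : perm_eq s (r ++ s') by apply: IHr => // y yr; apply: rs; rewrite inE yr orbT.
have xs' : x \in s'.
  by have := rs x (mem_head x r); rewrite (perm_mem ps) mem_cat (negbTE xr).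
apply: (perm_trans ps); rewrite perm_sym -cat1s perm_catCA perm_cat2l perm_sym.
exact: perm_to_rem.
Qed.

Lemma coprime_big_gcdn_dvdn (I : finType) (F : I -> nat) (p d : nat) :
  gcdn p (\big[gcdn/0%N]_i F i) = 1%N -> (forall i, p %| d * F i)%N -> (p %| d)%N.
Proof.
move=> /eqP cop pdF; rewrite -(Gauss_dvdr d cop) mulnC.
rewrite (big_morph (muln d) (muln_gcdr d) (muln0 d)).
by apply: (big_ind (fun x => p %| x)%N) => // x y px py; rewrite dvdn_gcd px py.
Qed.

Lemma natr_div_inj (F : numFieldType) (d : nat) :
  (0 < d)%N -> injective (fun k : nat => k%:R / d%:R : F).
Proof.
move=> d_gt0 x y /(congr1 (fun z => z * d%:R)) /=.
by rewrite !divfK ?pnatr_eq0 -?lt0n // => /eqP; rewrite eqr_nat => /eqP.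
Qed.

Lemma natr_div_addn_neq0 (F : numFieldType) (p d k : nat) :
  (0 < p)%N -> (0 < d)%N -> p%:R / d%:R + k%:R != 0 :> F.
Proof.
move=> p_gt0 d_gt0; have d0 : d%:R != 0 :> F by rewrite pnatr_eq0 -lt0n.
have -> : p%:R / d%:R + k%:R = (p + k * d)%N%:R / d%:R :> F.
  by rewrite natrD natrM; field.
by rewrite mulf_neq0 ?invr_eq0 // pnatr_eq0 addn_eq0 negb_and -lt0n p_gt0.
Qed.

Lemma addq_frac (x k d : nat) : (0 < d)%N ->
  x%:Q / d%:Q + k%:Q = (x + k * d)%N%:Q / d%:Q.
Proof.
by move=> d_gt0; rewrite PoszD PoszM intrD intrM; field; rewrite pnatr_eq0 -lt0n.
Qed.

Lemma addq_frac_inj (x y k d : nat) : (0 < d)%N ->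
  x%:Q / d%:Q + k%:Q = y%:Q / d%:Q -> (x + k * d)%N = y.
Proof. by move=> d_gt0; rewrite addq_frac // -!pmulrn; apply: natr_div_inj. Qed.

Section HypergeometricSeries.
Variable R : realType.
Local Notation C := R[i].

Lemma toCE : @toC R = real_complex R. Proof. by []. Qed.

Definition shift_prod (cs : seq R) (z : C) : C := \prod_(c <- cs) (z + toC c).

Lemma shift_prod_cat cs ds z : shift_prod (cs ++ ds) z = shift_prod cs z * shift_prod ds z.
Proof. exact: big_cat. Qed.

Lemma shift_prod_perm cs ds : perm_eq cs ds -> shift_prod cs =1 shift_prod ds.
Proof. by move=> pcd z; apply: perm_big. Qed.

Lemma foldr_dshiftE (f : R -> C) (cs : seq R) (H : series C) q :
  foldr (fun c G => dshift (f c) G) H cs q = \prod_(c <- cs) (ratr q + f c) * H q.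
Proof.
elim: cs => [|c cs IHcs] /=; first by rewrite big_nil mul1r.
by rewrite /dshift IHcs big_cons mulrA.
Qed.

(* Both halves act on [x^q] through [ratr q - 1], as [x (delta + a) = (delta + a - 1) x]. *)
Lemma hyperopE bs als (H : series C) q : hyperop bs als H q =
  shift_prod bs (ratr q - 1) * H q - shift_prod als (ratr q - 1) * H (q - 1).
Proof.
rewrite /hyperop /xmul (foldr_dshiftE (fun b => toC b - 1)) foldr_dshiftE rmorphB rmorph1.
by rewrite /shift_prod; congr (_ * _ - _); apply: eq_bigr => b _; rewrite addrA addrAC.
Qed.

Lemma is_solution_perm bs bs' als als' (H : series C) :
  perm_eq bs bs' -> perm_eq als als' -> is_solution bs als H -> is_solution bs' als' H.
Proof.
move=> pb pa solH q.
by rewrite hyperopE -(shift_prod_perm pb) -(shift_prod_perm pa) -hyperopE.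
Qed.

Lemma is_solution_cancel bs als ds (H : series C) :
  (forall q, shift_prod ds (ratr q - 1) = 0 -> H q = 0 /\ H (q - 1) = 0) ->
  is_solution (bs ++ ds) (als ++ ds) H -> is_solution bs als H.
Proof.
move=> ds0 solH q; have := solH q; rewrite !hyperopE !shift_prod_cat.
have [/ds0[-> ->] _|dsq] := eqVneq (shift_prod ds (ratr q - 1)) 0.
  by rewrite !mulr0 subrr.
rewrite mulrAC [_ * _ * H (q - 1)]mulrAC -mulrBl => /eqP.
by rewrite mulf_eq0 (negbTE dsq) orbF => /eqP.
Qed.

Lemma is_solution_of_recurrence bs als (H : series C) (c : rat) :
  in_xcCx c H -> shift_prod bs (ratr c - 1) * H c = 0 ->
  (forall k : nat, shift_prod bs (ratr c + k%:R) * H (c + k.+1%:Q) =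
                   shift_prod als (ratr c + k%:R) * H (c + k%:Q)) ->
  is_solution bs als H.
Proof.
move=> suppH H0 Hrec q; rewrite hyperopE.
have suppH0 p : ~ (exists k : nat, p = c + k%:Q) -> H p = 0.
  by move=> offp; apply/eqP/negP=> /negP /suppH.
have [[[|k] ->]|off] := pselect (exists k : nat, q = c + k%:Q).
- rewrite addr0 (suppH0 (c - 1)) ?mulr0 ?subr0 // => -[k].
  by rewrite -pmulrn; have := ler0n rat k; lra.
- have -> : c + k.+1%:Q - 1 = c + k%:Q by rewrite -!pmulrn mulrSr addrA addrK.
  by rewrite rmorphD /= rmorph_nat -natr1 addrA addrK Hrec subrr.
- rewrite (suppH0 q off) (suppH0 (q - 1)) ?mulr0 ?subrr // => -[k qk]; apply: off.
  by exists k.+1; rewrite -[q](subrK 1) qk -!pmulrn mulrSr addrA.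
Qed.

Lemma lin_indep_on_leading {T : eqType} (I : T -> Prop) (H : T -> series C)
    (e : T -> rat) :
  (forall b, I b -> H b (e b) != 0) ->
  (forall b b', I b -> I b' -> H b' (e b) != 0 -> b' = b) ->
  lin_indep_on I H.
Proof.
move=> lead sep s k us sI sum0 b bs.
have := sum0 (e b); rewrite (bigD1_seq b) //= big1_seq => [|b' /andP[b'b b's]].
  by rewrite addr0 => /eqP; rewrite mulf_eq0 (negbTE (lead _ (sI _ bs))) orbF => /eqP.
have [->|/(sep _ _ (sI _ bs) (sI _ b's)) b'E] := eqVneq (H b' (e b)) 0.
  by rewrite mulr0.
by rewrite b'E eqxx in b'b.
Qed.

Definition subst_series (F : nat -> C) (d : nat) : series C := fun q =>
  if `[< exists N : nat, q = N%:Q / d%:Q >]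
  then F (xget 0%N [set N : nat | q = N%:Q / d%:Q]) else 0.

Lemma subst_series_nat F d (N : nat) :
  (0 < d)%N -> subst_series F d (N%:Q / d%:Q) = F N.
Proof.
move=> d_gt0; have exN : exists N' : nat, N%:Q / d%:Q = N'%:Q / d%:Q by exists N.
rewrite /subst_series asboolT //; congr F; apply/esym.
by have /= := xgetPex 0%N exN; rewrite -!pmulrn => /(natr_div_inj d_gt0).
Qed.

Lemma subst_series_supp F d q : subst_series F d q != 0 ->
  exists2 N : nat, q = N%:Q / d%:Q & F N != 0.
Proof.
rewrite /subst_series; case: asboolP => [exN|]; last by rewrite eqxx.
by exists (xget 0%N [set N : nat | q = N%:Q / d%:Q]) => //; apply: xgetPex exN.
Qed.

Lemma is_subst_subst_series F d : (0 < d)%N -> is_subst F d (subst_series F d).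
Proof.
move=> d_gt0; split=> [N|q]; first by rewrite subst_series_nat.
by case/subst_series_supp=> N qN _; exists N.
Qed.

Lemma poch0 (x : C) : poch x 0 = 1.
Proof. exact: big_ord0. Qed.

Lemma pochS (x : C) k : poch x k.+1 = poch x k * (x + k%:R).
Proof. exact: big_ord_recr. Qed.

Lemma poch_natr_div_neq0 (p d k : nat) :
  (0 < p)%N -> (0 < d)%N -> poch (p%:R / d%:R : C) k != 0.
Proof.
move=> p_gt0 d_gt0; rewrite prodf_seq_neq0; apply/allP=> j _.
exact: natr_div_addn_neq0.
Qed.

End HypergeometricSeries.

Section Parallelepiped.
Variables (R : realType) (n m : nat) (a : 'I_m -> 'rV[int]_n) (a0 : 'rV[int]_n)
  (l0 : nat) (l : 'I_m -> nat) (c0 bi : 'rV[int]_n).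
Hypotheses (indepA : lin_indep_R R a) (l0_gt0 : (0 < l0)%N)
  (l_gt0 : forall r, (0 < l r)%N)
  (coprime_l : gcdn l0 (\big[gcdn/0%N]_(r < m) l r) = 1%N)
  (l0_a0 : a0 *+ l0 = \sum_(r < m) a r *+ l r)
  (l0_sum : l0 = (\sum_(r < m) l r)%N)
  (Bk_bi : in_Bk R a a0 c0 bi) (interior_bi : interior_pt R a bi).

Local Notation toR := (@toR R n).
Local Notation AR := (AR R a).
Local Notation AZ := (AZ a).
Local Notation coords := (coords R a).
Local Notation in_ZA := (in_ZA a).
Local Notation in_ZAplus := (in_ZAplus a a0).
Local Notation Ck := (in_Ck a a0 c0).
Local Notation Bk := (in_Bk R a a0 c0).
Local Notation interior := (interior_pt R a).
Local Notation S0 := (s0 a a0 l0 bi).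
Local Notation SV := (svec a a0 l0 bi).

Lemma l0_neq0 (F : numDomainType) : l0%:R != 0 :> F.
Proof. by rewrite pnatr_eq0 -lt0n. Qed.

Lemma toRD u v : toR (u + v) = toR u + toR v. Proof. exact: map_mxD. Qed.
Lemma toRB u v : toR (u - v) = toR u - toR v. Proof. exact: map_mxB. Qed.
Lemma toRMn u k : toR (u *+ k) = toR u *+ k. Proof. by rewrite /Defs.toR raddfMn. Qed.
Lemma toR_mulmx (z : 'rV[int]_m) : toR (z *m AZ) = map_mx intr z *m AR.
Proof. exact: map_mxM. Qed.

Lemma toR_inj : injective toR.
Proof.
move=> u v /rowP uv; apply/rowP=> k; apply: (@intr_inj R).
by have := uv k; rewrite !mxE.
Qed.

Lemma mulmxAR_inj : injective (fun c : 'rV[R]_m => c *m AR).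
Proof.
move=> c c' /eqP; rewrite -subr_eq0 -mulmxBl => /eqP /indepA /eqP.
by rewrite subr_eq0 => /eqP.
Qed.

Lemma coordsP v : in_VZ R a v -> toR v = coords v *m AR.
Proof. exact: xgetPex. Qed.

Lemma coords_eq v c : toR v = c *m AR -> coords v = c.
Proof. by move=> vc; apply: mulmxAR_inj; rewrite -coordsP -?vc //; exists c. Qed.

Definition l_row : 'rV[int]_m := \row_r (l r)%:Z.

Lemma l_row_mulmx : l_row *m AZ = a0 *+ l0.
Proof.
rewrite l0_a0 mulmx_sum_row; apply: eq_bigr => r _.
by rewrite mxE -natz scaler_nat; congr (_ *+ _); apply/rowP => k; rewrite !mxE.
Qed.

Definition a0_coords : 'rV[R]_m := \row_r ((l r)%:R / l0%:R).

Lemma toR_a0 : toR a0 = a0_coords *m AR.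
Proof.
have -> : a0_coords = l0%:R^-1 *: map_mx intr l_row.
  by apply/rowP => r; rewrite !mxE mulrC.
rewrite -scalemxAl -toR_mulmx l_row_mulmx toRMn -scaler_nat scalerA.
by rewrite mulVf ?l0_neq0 ?scale1r.
Qed.

Lemma in_ZAD u v : in_ZA u -> in_ZA v -> in_ZA (u + v).
Proof. by move=> [z ->] [w ->]; exists (z + w); rewrite mulmxDl. Qed.

Lemma in_ZAB u v : in_ZA u -> in_ZA v -> in_ZA (u - v).
Proof. by move=> [z ->] [w ->]; exists (z - w); rewrite mulmxBl. Qed.

Lemma in_ZA_a0_l0 (q : int) : in_ZA (a0 *~ (l0%:Z * q)).
Proof.
exists (q *: l_row).
by rewrite -scalemxAl l_row_mulmx mulrzA -pmulrn -scaler_int intz.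
Qed.

Lemma in_ZAplusD u v : in_ZAplus u -> in_ZAplus v -> in_ZAplus (u + v).
Proof.
move=> [x [z ->]] [y [w ->]]; exists (x + y), (z + w).
by rewrite mulrzDr mulmxDl addrACA.
Qed.

Lemma in_ZAplusB u v : in_ZAplus u -> in_ZAplus v -> in_ZAplus (u - v).
Proof.
move=> [x [z ->]] [y [w ->]]; exists (x - y), (z - w).
by rewrite mulrzBr mulmxBl opprD addrACA.
Qed.

Lemma Ck_of_ZAplus u : in_ZAplus (u - bi) -> Ck u.
Proof.
move=> ZAu; rewrite /in_Ck -(subrKA bi).
by apply: in_ZAplusD ZAu _; case: Bk_bi.
Qed.

(* In coordinates, [s l_r / l_0] must be an integer for every [r]. *)
Lemma dvdn_of_in_ZA_a0 s : in_ZA (a0 *+ s) -> (l0 %| s)%N.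
Proof.
case=> z a0z; apply: (coprime_big_gcdn_dvdn coprime_l) => r.
have /rowP/(_ r) : a0_coords *+ s = map_mx intr z.
  by apply: mulmxAR_inj; rewrite -toR_mulmx -a0z toRMn toR_a0 -!scaler_nat scalemxAl.
rewrite mulmxnE !mxE => lsz.
have : (s * l r)%N%:Z = z 0 r * l0%:Z.
  by apply: (@intr_inj R); rewrite intrM -lsz -!pmulrn natrM; field; apply: l0_neq0.
move/(congr1 (fun x : int => (l0%:Z %| x)%Z)).
by rewrite dvdz_mull // dvdzE !absz_nat => ->.
Qed.

(* Reduce the [a_0]-coefficient of [b_j - b_i] modulo [l_0]: [l_0 a_0] lies in [ZA]. *)
Lemma s0_exists bj :
  Ck bj -> exists2 s : nat, (s < l0)%N & in_ZA (bj - (bi + a0 *+ s)).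
Proof.
move=> Ck_bj; have [d [z ebij]] : in_ZAplus (bj - bi).
  by have := in_ZAplusB Ck_bj Bk_bi.2; rewrite opprB subrKA.
have l0_gt0' : (0 < l0%:Z)%R by rewrite ltz_nat.
have dl0_ge0 : (0 <= d %% l0%:Z)%Z by rewrite modz_ge0 // gt_eqF.
exists `|(d %% l0%:Z)%Z|%N; first by rewrite -ltz_nat gez0_abs // ltz_pmod.
have -> : bj - (bi + a0 *+ `|(d %% l0%:Z)%Z|%N) =
          a0 *~ (l0%:Z * (d %/ l0%:Z)%Z) + z *m AZ.
  rewrite opprD addrA ebij pmulrn gez0_abs // addrAC -mulrzBr.
  by rewrite {1}(divz_eq d l0%:Z) addrK mulrC.
by apply: in_ZAD; [apply: in_ZA_a0_l0 | exists z].
Qed.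

Lemma s0_uniq bj s s' : (s < l0)%N -> (s' < l0)%N ->
  in_ZA (bj - (bi + a0 *+ s)) -> in_ZA (bj - (bi + a0 *+ s')) -> s = s'.
Proof.
wlog le_ss' : s s' / (s <= s')%N.
  move=> W lt_s lt_s' ZAs ZAs'.
  by case: (leqP s s') => [|/ltnW] le; [|apply/esym]; apply: W.
move=> _ lt_s' ZAs ZAs'.
have /dvdn_of_in_ZA_a0 : in_ZA (a0 *+ (s' - s)).
  have := in_ZAB ZAs ZAs'; rewrite opprB addrC subrKA [bi + _]addrC addrKA.
  by rewrite (mulrnBr _ le_ss').
rewrite /dvdn modn_small; [move/eqP|]; lia.
Qed.

Lemma s0P bj : Ck bj -> (S0 bj < l0)%N /\ in_ZA (bj - (bi + a0 *+ S0 bj)).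
Proof.
move/s0_exists=> [s lt_s ZAs].
have exs : exists s : nat, (s < l0)%N /\ in_ZA (bj - (bi + a0 *+ s)) by exists s.
exact: (xgetPex 0%N exs).
Qed.

Lemma s0_eq bj s : Ck bj -> (s < l0)%N -> in_ZA (bj - (bi + a0 *+ s)) -> S0 bj = s.
Proof. by move=> /s0P[lt_s0 ZAs0] lt_s ZAs; apply: s0_uniq ZAs0 ZAs. Qed.

Lemma svecP bj : Ck bj -> bi + a0 *+ S0 bj = bj - SV bj *m AZ.
Proof.
case/s0P=> _ [z ez].
have exz : exists z, bi + a0 *+ S0 bj = bj - z *m AZ.
  by exists z; rewrite -ez opprB subrKC.
exact: (xgetPex 0 exz).
Qed.

Lemma coords_Bk bj : Bk bj ->
  coords bj = coords bi + a0_coords *+ S0 bj + map_mx intr (SV bj).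
Proof.
move=> [[VZ_bj _] Ck_bj]; apply: coords_eq.
have ebj : bj = bi + a0 *+ S0 bj + SV bj *m AZ by rewrite svecP // subrK.
rewrite {1}ebj !toRD toRMn toR_mulmx toR_a0 (coordsP Bk_bi.1.1).
by rewrite !mulmxDl -!scaler_nat scalemxAl.
Qed.

Lemma coords_Bk_itv bj r : Bk bj -> 0 <= coords bj 0 r < 1.
Proof. by case=> [[_ [c [c_itv /coords_eq ->]]] _]. Qed.

(* Coordinates in [0, 1) that differ by an integer are equal. *)
Lemma s0_inj bj bj' : Bk bj -> Bk bj' -> S0 bj = S0 bj' -> bj = bj'.
Proof.
move=> Bk_bj Bk_bj' eq_s0; apply: toR_inj.
rewrite (coordsP Bk_bj.1.1) (coordsP Bk_bj'.1.1); congr (_ *m _); apply/rowP=> r.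
have := coords_Bk_itv r Bk_bj; have := coords_Bk_itv r Bk_bj'.
have /rowP/(_ r) := coords_Bk Bk_bj; have /rowP/(_ r) := coords_Bk Bk_bj'.
rewrite !mxE eq_s0 => -> -> itv' itv.
have : SV bj 0 r = SV bj' 0 r.
  suff : (-1 < SV bj 0 r - SV bj' 0 r < 1)%R by lia.
  by rewrite -(ltr_int R) -(ltrz1 R) intrB mulrN1z; lra.
by move->.
Qed.

Lemma s0_surj t : (t < l0)%N -> exists2 bj, Bk bj & S0 bj = t.
Proof.
move=> lt_t; set x := coords bi + a0_coords *+ t.
set fl : 'rV[int]_m := \row_r Num.floor (x 0 r).
set bj := bi + a0 *+ t - fl *m AZ.
have Ck_bj : Ck bj.
  apply: Ck_of_ZAplus; exists t, (- fl).
  by rewrite addrAC [bi + _]addrC addrK pmulrn mulNmx.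
have Bk_bj : Bk bj.
  have toR_bj : toR bj = (x - map_mx intr fl) *m AR.
    rewrite toRB toRD toRMn toR_mulmx toR_a0 (coordsP Bk_bi.1.1).
    by rewrite mulmxBl mulmxDl -!scaler_nat scalemxAl.
  split=> //; split; first by exists (x - map_mx intr fl).
  exists (x - map_mx intr fl); split=> // r.
  by move: (floor_itv (x 0 r)); rewrite !mxE intrD => /andP[? ?]; lra.
exists bj => //; apply: s0_eq => //.
by rewrite /bj addrAC subrr add0r; exists (- fl); rewrite mulNmx.
Qed.

Definition s0_inv (t : nat) : 'rV[int]_n := xget 0 [set bj | Bk bj /\ S0 bj = t].

Lemma s0_invP t : (t < l0)%N -> Bk (s0_inv t) /\ S0 (s0_inv t) = t.
Proof.
case/s0_surj=> bj Bk_bj s0_bj.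
have ex_bj : exists bj, Bk bj /\ S0 bj = t by exists bj.
exact: (xgetPex 0 ex_bj).
Qed.

Lemma s0K bj : Bk bj -> s0_inv (S0 bj) = bj.
Proof.
move=> Bk_bj; have [Bk_inv s0_inv_bj] := s0_invP (s0P Bk_bj.2).1.
exact: s0_inj.
Qed.

Local Notation bdry_val := (@bdry_val R n m a a0 l0 c0 bi).
Local Notation alpha_list := (alpha_list R a l bi).
Local Notation bdry_vals := (bdry_vals R a a0 l0 c0 bi).
Local Notation betas := (betas R a a0 l0 c0 bi).
Local Notation alphas := (alphas R a a0 l0 l c0 bi).

(* A vanishing coordinate [v_r^(j) = 0] of [b_j] forces
   [(v_r^(i) + sigma) / l_r = 1 - s_0^(j) / l_0] with [sigma = l_r + s_r^(j)]. *)
Lemma alpha_list_bdry bj : Bk bj -> boundary_pt R a bj ->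
  1 - (S0 bj)%:R / l0%:R \in alpha_list.
Proof.
move=> Bk_bj /existsNP[r]; move/negP; rewrite -leNgt => crd_le0.
have /andP[crd_ge0 _] := coords_Bk_itv r Bk_bj.
have /rowP/(_ r) := coords_Bk Bk_bj; rewrite !mxE mulmxnE !mxE -[_ *+ S0 bj]mulr_natr.
set v := coords bi 0 r; set w := _ * (S0 bj)%:R; set z := SV bj 0 r => crdE.
have /andP[v_gt0 v_lt1] : 0 < v < 1.
  by rewrite interior_bi; case/andP: (coords_Bk_itv r Bk_bi).
have w_ge0 : 0 <= w by rewrite mulr_ge0 ?divr_ge0 ?ler0n.
have w_lt : w < (l r)%:R.
  by rewrite /w mulrAC ltr_pdivrMr ?ltr0n // -!natrM ltr_nat ltn_pmul2l ?(s0P Bk_bj.2).1.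
have zE : z%:~R = - (v + w) by lra.
have z_lt0 : (z < 0)%R by rewrite -(ltrz0 R) zE; lra.
have z_gt : (- (l r)%:Z - 1 < z)%R.
  by rewrite -(ltr_int R) zE intrB mulrNz -!pmulrn; lra.
apply/flattenP; exists [seq (v + sg%:R) / (l r)%:R | sg <- iota 0 (l r)].
  by apply/mapP; exists r; rewrite ?mem_enum.
apply/mapP; exists `|((l r)%:Z + z)%R|%N; first by rewrite mem_iota; lia.
have l_neq0 : (l r)%:R != 0 :> R by rewrite pnatr_eq0 -lt0n.
have -> : `|((l r)%:Z + z)%R|%N%:R = ((l r)%:Z + z)%:~R :> R.
  by rewrite pmulrn gez0_abs //; lia.
by rewrite intrD zE -pmulrn /w; field; rewrite l_neq0 l0_neq0.
Qed.

Definition full_betas : seq R := [seq u%:R / l0%:R | u <- iota 1 l0].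

Lemma one_sub_frac_inj : injective (fun t : nat => 1 - t%:R / l0%:R : R).
Proof. by move=> t t' /addrI /oppr_inj /(natr_div_inj l0_gt0). Qed.

Lemma perm_full_betas : perm_eq full_betas [seq 1 - t%:R / l0%:R : R | t <- iota 0 l0].
Proof.
have flipE t : (t <= l0)%N -> (l0 - t)%:R / l0%:R = 1 - t%:R / l0%:R :> R.
  by move=> le_t; rewrite natrB //; field; apply: l0_neq0.
apply: uniq_perm.
- by rewrite map_inj_uniq ?iota_uniq //; apply: natr_div_inj.
- by rewrite map_inj_uniq ?iota_uniq //; apply: one_sub_frac_inj.
move=> x; apply/mapP/mapP => -[u]; rewrite mem_iota => /andP[u_ge u_lt] ->.
  by exists (l0 - u)%N; rewrite ?mem_iota -?flipE ?subKn //; lia.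
by exists (l0 - u)%N; rewrite ?mem_iota ?flipE //; lia.
Qed.

Lemma bdry_val_s0_inv t : (t < l0)%N ->
  bdry_val (1 - t%:R / l0%:R) = ~~ `[< interior (s0_inv t) >].
Proof.
move=> lt_t; have [Bk_inv s0_inv_t] := s0_invP lt_t.
apply/asboolP/negP => [[bj [Bk_bj [bdry_bj /one_sub_frac_inj tE]]] /asboolP|int_inv].
  by rewrite tE s0K.
exists (s0_inv t); split=> //; split; last by rewrite s0_inv_t.
by move=> int_t; apply: int_inv; apply/asboolP.
Qed.

Lemma uniq_bdry_vals : uniq bdry_vals.
Proof. by rewrite filter_uniq // map_inj_uniq ?iota_uniq //; apply: one_sub_frac_inj. Qed.

Lemma perm_betas : perm_eq full_betas (betas ++ bdry_vals).
Proof.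
rewrite -(perm_filterC bdry_val full_betas) perm_catC.
exact: perm_cat (perm_refl _) (perm_filter _ perm_full_betas).
Qed.

Lemma perm_alphas : perm_eq alpha_list (alphas ++ bdry_vals).
Proof.
have bdry_alpha : {subset bdry_vals <= alpha_list}.
  move=> q; rewrite mem_filter => /andP[/asboolP[bj [Bk_bj [bdry_bj ->]]] _].
  exact: alpha_list_bdry.
apply: perm_trans (perm_cat_foldr_rem uniq_bdry_vals bdry_alpha) _.
by rewrite perm_catC.
Qed.

Definition interior_s0 : pred nat := fun t => `[< interior (s0_inv t) >].

Definition interior_pts : seq 'rV[int]_n := [seq s0_inv t | t <- iota 0 l0 & interior_s0 t].

Lemma interior_ptsP bj : bj \in interior_pts <-> Bk bj /\ interior bj.
Proof.
split=> [/mapP[t]|[Bk_bj int_bj]].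
  by rewrite mem_filter mem_iota => /andP[/asboolP int_t /andP[_ /s0_invP[]]] ? _ ->.
apply/mapP; exists (S0 bj); last by rewrite s0K.
rewrite mem_filter mem_iota add0n (s0P Bk_bj.2).1 leq0n !andbT /interior_s0 s0K //.
exact/asboolP.
Qed.

Lemma uniq_interior_pts : uniq interior_pts.
Proof.
rewrite map_inj_in_uniq ?filter_uniq ?iota_uniq // => t t'.
rewrite !mem_filter !mem_iota => /andP[_ /andP[_ lt_t]] /andP[_ /andP[_ lt_t']] eq_inv.
by rewrite -(s0_invP lt_t).2 -(s0_invP lt_t').2 eq_inv.
Qed.

Lemma size_interior_pts : (size interior_pts + size bdry_vals)%N = l0.
Proof.
rewrite size_map size_filter /bdry_vals size_filter count_map.
rewrite [X in (_ + X)%N](@eq_in_count _ _ (predC interior_s0)).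
  by rewrite count_predC size_iota.
by move=> t; rewrite mem_iota => /andP[_ lt_t]; apply: bdry_val_s0_inv.
Qed.

Lemma size_betas : size betas = size interior_pts.
Proof.
apply/eqP; rewrite -(eqn_add2r (size bdry_vals)) size_interior_pts -size_cat.
by rewrite -(perm_size perm_betas) size_map size_iota.
Qed.

Lemma size_alphas : size alphas = size interior_pts.
Proof.
apply/eqP; rewrite -(eqn_add2r (size bdry_vals)) size_interior_pts -size_cat.
rewrite -(perm_size perm_alphas) size_flatten sumnE /shape -map_comp big_map big_enum /=.
by rewrite l0_sum; apply/eqP/eq_bigr => r _; rewrite size_map size_iota.
Qed.

Local Notation C := R[i].
Local Notation Fcoef := (Fcoef R a a0 l0 l bi).
Local Notation Fser := (Fser R a a0 l0 l bi).
Local Notation expo bj := ((S0 bj)%:Q / l0%:Q).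

Lemma ratr_expo bj : ratr (expo bj) = (S0 bj)%:R / l0%:R :> C.
Proof. by rewrite fmorph_div !rmorph_nat. Qed.

Lemma Fcoef0 bj : Fcoef bj 0 = 1.
Proof.
rewrite /Defs.Fcoef !big1 ?divr1 // => [t _|r _]; first exact: poch0.
by rewrite big1 // => sg _; apply: poch0.
Qed.

Lemma Fcoef_succ bj k :
  Fcoef bj k.+1 * \prod_(t < l0) (((S0 bj)%:R + t.+1%:R) / l0%:R + k%:R) =
  Fcoef bj k * \prod_(r < m) \prod_(sg < l r)
     ((toC (coords bj 0 r) - (SV bj 0 r)%:~R + sg%:R) / (l r)%:R + k%:R).
Proof.
have den_neq0 (t : 'I_l0) j : ((S0 bj)%:R + t.+1%:R) / l0%:R + j%:R != 0 :> C.
  by rewrite -natrD natr_div_addn_neq0 // addnS.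
have poch_neq0 (t : 'I_l0) : poch (((S0 bj)%:R + t.+1%:R) / l0%:R) k != 0.
  by rewrite -natrD poch_natr_div_neq0 // addnS.
rewrite /Defs.Fcoef.
under eq_bigr => r _ do under eq_bigr => sg _ do rewrite pochS.
under [X in _ / X]eq_bigr => t _ do rewrite pochS.
under eq_bigr => r _ do rewrite big_split /=.
rewrite !big_split /=.
set D := \prod_(t < l0) poch _ k; set P := \prod_(t < l0) (_ + _).
have D_neq0 : D != 0 by rewrite prodf_seq_neq0; apply/allP => t _; apply: poch_neq0.
have P_neq0 : P != 0 by rewrite prodf_seq_neq0; apply/allP => t _; apply: den_neq0.
by field; rewrite D_neq0.
Qed.

Definition Hser bj : series C := subst_series (Fser bj) l0.

Lemma Hser_expo bj (k : nat) : Hser bj (expo bj + k%:Q) = Fcoef bj k.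
Proof.
rewrite addq_frac // /Hser subst_series_nat // /Defs.Fser leq_addr addKn.
by rewrite dvdn_mull //= mulnK.
Qed.

Lemma Hser_supp bj : in_xcCx (expo bj) (Hser bj).
Proof.
move=> q /subst_series_supp[N ->]; rewrite /Defs.Fser.
case: ifP => [/andP[le_s0N dvd_l0] _|_]; last by rewrite eqxx.
by exists ((N - S0 bj) %/ l0)%N; rewrite addq_frac // divnK // subnKC.
Qed.

Lemma shift_prod_full_betas bj (k : nat) :
  shift_prod full_betas (ratr (expo bj) + k%:R) =
  \prod_(t < l0) (((S0 bj)%:R + t.+1%:R) / l0%:R + k%:R).
Proof.
rewrite /shift_prod /full_betas.
have -> : iota 1 l0 = map (addn 1) (index_iota 0 l0) by rewrite /index_iota subn0 -iotaDl.
rewrite !big_map big_mkord; apply: eq_bigr => t _.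
rewrite ratr_expo toCE fmorph_div /= !rmorph_nat add1n.
by field; apply: l0_neq0.
Qed.

Lemma shift_prod_alpha_list bj (k : nat) : Bk bj ->
  shift_prod alpha_list (ratr (expo bj) + k%:R) =
  \prod_(r < m) \prod_(sg < l r)
     ((toC (coords bj 0 r) - (SV bj 0 r)%:~R + sg%:R) / (l r)%:R + k%:R).
Proof.
move=> Bk_bj; rewrite /shift_prod big_flatten big_map big_enum /=.
apply: eq_bigr => r _.
have -> : iota 0 (l r) = index_iota 0 (l r) by rewrite /index_iota subn0.
rewrite big_map big_mkord.
apply: eq_bigr => sg _.
have /rowP/(_ r) := coords_Bk Bk_bj; rewrite !mxE mulmxnE !mxE => ->.
rewrite ratr_expo toCE !(rmorphD, rmorphB, fmorph_div, rmorphMn, rmorph_int, rmorph_nat) /=.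
have l_neq0 : (l r)%:R != 0 :> C by rewrite pnatr_eq0 -lt0n.
by rewrite -mulr_natr; field; rewrite l_neq0 l0_neq0.
Qed.

Lemma Hser_full_solution bj : Bk bj -> is_solution full_betas alpha_list (Hser bj).
Proof.
move=> Bk_bj; have lt_s0 := (s0P Bk_bj.2).1.
apply: (is_solution_of_recurrence (@Hser_supp bj)) => [|k].
  have -> : shift_prod full_betas (ratr (expo bj) - 1) = 0.
    apply/eqP; rewrite prodf_seq_eq0; apply/hasP; exists ((l0 - S0 bj)%:R / l0%:R).
      by apply: map_f; rewrite mem_iota; lia.
    rewrite /= ratr_expo toCE fmorph_div /= !rmorph_nat natrB ?(ltnW lt_s0) //.
    by apply/eqP; field; apply: l0_neq0.
  by rewrite mul0r.
rewrite !Hser_expo shift_prod_full_betas shift_prod_alpha_list //.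
by rewrite mulrC Fcoef_succ mulrC.
Qed.

Lemma shift_prod_bdry_vals_neq0 bj (k : nat) : Bk bj -> interior bj ->
  shift_prod bdry_vals (ratr (expo bj + k%:Q) - 1) != 0.
Proof.
move=> Bk_bj int_bj; rewrite prodf_seq_neq0; apply/allP => q.
rewrite mem_filter => /andP[/asboolP[bj' [Bk_bj' [bdry_bj' ->]]] _] /=.
rewrite addq_frac // toCE fmorph_div rmorphB rmorph1 fmorph_div /= !rmorph_nat.
rewrite addrA subrK subr_eq0; apply/negP => /eqP /(natr_div_inj l0_gt0) s0E.
have lt_s0' := (s0P Bk_bj'.2).1.
have eq_s0 : S0 bj = S0 bj' by move: s0E lt_s0'; case: k => [|k]; rewrite ?mulSn; lia.
by apply: bdry_bj'; rewrite -(s0_inj Bk_bj Bk_bj' eq_s0).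
Qed.

Lemma Hser_solution bj : Bk bj -> interior bj -> is_solution betas alphas (Hser bj).
Proof.
move=> Bk_bj int_bj; apply: (is_solution_cancel (ds := bdry_vals)); last first.
  exact: is_solution_perm perm_betas perm_alphas (Hser_full_solution Bk_bj).
move=> q bdry0; split; apply/eqP/negP => /negP /Hser_supp[k qE].
  by move: bdry0; rewrite qE; apply/eqP; apply: shift_prod_bdry_vals_neq0.
have {}qE : q = expo bj + k.+1%:Q by rewrite -[q](subrK 1) qE -!pmulrn mulrSr addrA.
by move: bdry0; rewrite qE; apply/eqP; apply: shift_prod_bdry_vals_neq0.
Qed.

Lemma lin_indep_Hser : lin_indep_on (fun bj => Bk bj /\ interior bj) Hser.
Proof.
apply: (lin_indep_on_leading (e := fun bj => expo bj)).
  by move=> bj _; rewrite -[expo bj]addr0 (Hser_expo bj 0) Fcoef0 oner_eq0.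
move=> bj bj' [Bk_bj _] [Bk_bj' _].
case/Hser_supp=> k /esym /addq_frac_inj s0E; have lt_s0 := (s0P Bk_bj.2).1.
have eq_s0 : S0 bj' = S0 bj by move: s0E lt_s0; case: k => [|k]; rewrite ?mulSn; lia.
exact: s0_inj.
Qed.

End Parallelepiped.

Unset Implicit Arguments.

Theorem theorem6p17 (R : realType) (n m : nat) (a : 'I_m -> 'rV[int]_n)
  (a0 : 'rV[int]_n) (l0 : nat) (l : 'I_m -> nat) (c0 bi : 'rV[int]_n) :
  lin_indep_R R a ->
  (0 < l0)%N -> (forall r, 0 < l r)%N ->
  gcdn l0 (\big[gcdn/0%N]_(r < m) l r) = 1%N ->
  a0 *+ l0 = \sum_(r < m) a r *+ l r ->
  l0 = (\sum_(r < m) l r)%N ->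
  in_VZ R a c0 ->
  in_Bk R a a0 c0 bi ->
  interior_pt R a bi ->
  exists H : 'rV[int]_n -> series (R[i]),
    (forall bj, in_Bk R a a0 c0 bj -> interior_pt R a bj ->
       in_xcCx ((s0 a a0 l0 bi bj)%:Q / l0%:Q) (H bj) /\
       is_subst (Fser R a a0 l0 l bi bj) l0 (H bj) /\
       is_solution (betas R a a0 l0 c0 bi) (alphas R a a0 l0 l c0 bi) (H bj)) /\
    lin_indep_on (fun bj => in_Bk R a a0 c0 bj /\ interior_pt R a bj) H /\
    (exists s : seq 'rV[int]_n,
       uniq s /\ (forall bj, bj \in s <-> in_Bk R a a0 c0 bj /\ interior_pt R a bj) /\
       size (betas R a a0 l0 c0 bi) = size s /\
       size (alphas R a a0 l0 l c0 bi) = size s).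
Proof.
move=> indepA l0_gt0 l_gt0 coprime_l l0_a0 l0_sum _ Bk_bi interior_bi.
exists (Hser R a a0 l0 l bi); split; [|split].
- move=> bj Bk_bj interior_bj; split; first exact: Hser_supp.
  by split; [apply: is_subst_subst_series | apply: Hser_solution].
- exact: lin_indep_Hser.
- exists (interior_pts R a a0 l0 c0 bi).
  split; first exact: (uniq_interior_pts (l := l)).
  split; first exact: (interior_ptsP (l := l)).
  by split; [apply: (size_betas (l := l)) | apply: size_alphas].
Qed.
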